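(* Let $B>0$ and let $D_0$ be the outer disk bounded by the circle centered at $(0,0)$ of radius $1/B$ (so $D_0$ has curvature $-B$). Let $A$ be an inner disk of curvature $A>0$ tangent to $D_0$ (lying inside the circle), and let $$\mathbf a=\begin{bmatrix}m\\ n\end{bmatrix}=\mathrm{spin}(A,D_0).$$ Then $A=B+m^2+n^2$, the radius of $A$ is $1/A$, and its center is $$\left(\frac{m^2-n^2}{B(B+m^2+n^2)},\ \frac{2mn}{B(B+m^2+n^2)}\right).$$ Equivalently, in terms of the disk symbol (reduced center coordinates over curvature), $A$ is $\dfrac{(m^2-n^2)/B,\ 2mn/B}{m^2+n^2+B}$.
   Context: An inner disk of radius $r$ has curvature $1/r$ and signed radius $r$; the outer disk (exterior) of a circle of radius $r$ has curvature $-1/r$ and signed radius $-r$. Identify the plane with $\mathbb C$. For tangent disks $X,Y$ with centers $c_X,c_Y$ and signed radii $r_X,r_Y$, the tangency spinor is $\mathrm{spin}(X,Y)=\pm\sqrt{(c_Y-c_X)/(r_Xr_Y)}\in\mathbb C$, regarded as a vector in $\mathbb R^2$ (defined up to sign). The symbol of a disk of curvature $\beta$ centered at $(x,y)$ is $\frac{\dot x,\dot y}{\beta}$ with $\dot x=\beta x$, $\dot y=\beta y$. *)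

From HB Require Import structures.
From mathcomp Require Import all_boot all_order all_algebra.
From mathcomp Require Export complex.
Set Implicit Arguments. Unset Strict Implicit. Unset Printing Implicit Defensive.
Import Order.TTheory GRing.Theory Num.Theory.
Local Open Scope ring_scope.
Local Open Scope complex_scope.

(* A (generalized) disk in the plane, the plane identified with R[i]:
   its center and its signed radius (positive for an inner disk,
   negative for the outer disk = exterior of a circle). *)
Record disk (R : rcfType) := Disk { center : R[i]; sradius : R }.

Definition curvature (R : rcfType) (X : disk R) : R := (sradius X)^-1.

(* tangency of generalized disks: distance of centers = |r_X + r_Y|
   (external tangency for two inner disks, internal tangency of an inner
   disk with an outer disk). *)
Definition tangent (R : rcfType) (X Y : disk R) : Prop :=
  Normc.normc (center X - center Y) = `|sradius X + sradius Y|.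

(* (m,n) is a tangency spinor spin(X,Y) (defined up to sign):
   (m + i n)^2 = (c_Y - c_X) / (r_X r_Y). *)
Definition is_spin (R : rcfType) (X Y : disk R) (m n : R) : Prop :=
  (m +i* n) ^+ 2 = (center Y - center X) / (sradius X * sradius Y)%:C.

Definition outer_D0 (R : rcfType) (B : R) : disk R := Disk 0 (- B^-1).

(* The spinor equation expresses the center of A as (m + i n)^2 r / B, where r is the
   radius of A, so |c_A| = (m^2 + n^2) r / B. Internal tangency to D_0 says
   |c_A| = 1/B - r; comparing the two gives r (B + m^2 + n^2) = 1, and substituting
   r back into the center gives the claimed coordinates. *)
From HB Require Import structures.
From mathcomp Require Import all_boot all_order all_algebra.
From mathcomp Require Import complex.
From mathcomp Require Import ring.
Set Implicit Arguments. Unset Strict Implicit. Unset Printing Implicit Defensive.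
Import Order.TTheory GRing.Theory Num.Theory.
Local Open Scope ring_scope.
Local Open Scope complex_scope.

Section ComplexFacts.
Variable R : rcfType.
Implicit Types (m n k : R).

Lemma normc_real k : Normc.normc k%:C = `|k|.
Proof. by rewrite /= expr0n addr0 sqrtr_sqr. Qed.

Lemma normc_sqr m n : Normc.normc ((m +i* n) ^+ 2) = m ^+ 2 + n ^+ 2.
Proof. by rewrite expr2 Normc.normcM -expr2 sqr_sqrtr // addr_ge0 ?sqr_ge0. Qed.

Lemma sqr_complex_scale m n k :
  (m +i* n) ^+ 2 * k%:C = ((m ^+ 2 - n ^+ 2) * k) +i* (2 * m * n * k).
Proof. by rewrite expr2 /=; congr (_ +i* _); ring. Qed.

End ComplexFacts.

Section DiskTangentToOuterD0.
Variables (R : rcfType) (B : R) (A : disk R) (m n : R).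

Lemma center_of_spin_outer_D0 : B != 0 -> sradius A != 0 ->
  is_spin A (outer_D0 B) m n -> center A = (m +i* n) ^+ 2 * (sradius A / B)%:C.
Proof.
move=> B_neq0 rA_neq0.
have rB_neq0 : (sradius A * - B^-1)%:C != 0.
  by rewrite eq_complex /= eqxx andbT mulf_neq0 ?oppr_eq0 ?invr_eq0.
have -> : (sradius A / B)%:C = - (sradius A * - B^-1)%:C.
  by rewrite mulrN raddfN opprK.
by rewrite /is_spin /= => ->; rewrite mulrN divfK // sub0r !opprK.
Qed.

Lemma normc_center_tangent_outer_D0 :
  sradius A <= B^-1 -> tangent A (outer_D0 B) ->
  Normc.normc (center A) = B^-1 - sradius A.
Proof.
rewrite /tangent /= subr0 => rA_le ->.
by rewrite ler0_norm ?opprB // subr_le0.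
Qed.

Lemma sradius_tangent_spin_outer_D0 : 0 < B -> 0 < sradius A ->
  sradius A <= B^-1 -> tangent A (outer_D0 B) -> is_spin A (outer_D0 B) m n ->
  sradius A = (B + m ^+ 2 + n ^+ 2)^-1.
Proof.
move=> B_gt0 rA_gt0 rA_le tAD0.
have B_neq0 := lt0r_neq0 B_gt0.
move=> /(center_of_spin_outer_D0 B_neq0 (lt0r_neq0 rA_gt0)) cA.
have := normc_center_tangent_outer_D0 rA_le tAD0.
rewrite cA Normc.normcM normc_sqr normc_real ger0_norm; last first.
  by rewrite divr_ge0 ?ltW.
have s_ge0 : 0 <= m ^+ 2 + n ^+ 2 by rewrite addr_ge0 ?sqr_ge0.
have Bs_neq0 : B + m ^+ 2 + n ^+ 2 != 0 by rewrite -addrA gt_eqF ?ltr_wpDr.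
move=> radius_eq; apply: (mulIf Bs_neq0); rewrite mulVf //; apply/eqP.
have -> : sradius A * (B + m ^+ 2 + n ^+ 2) =
          1 + B * ((m ^+ 2 + n ^+ 2) * (sradius A / B) - (B^-1 - sradius A)).
  by field.
by rewrite radius_eq subrr mulr0 addr0.
Qed.

End DiskTangentToOuterD0.

Theorem propositionA1 (R : rcfType) (B : R) (A : disk R) (m n : R) :
  0 < B ->
  0 < sradius A ->                       (* A is an inner disk *)
  sradius A <= B^-1 ->                   (* A lies inside the circle of radius 1/B *)
  tangent A (outer_D0 B) ->
  is_spin A (outer_D0 B) m n ->
  curvature A = B + m ^+ 2 + n ^+ 2 /\
  sradius A = (curvature A)^-1 /\
  center A = ((m ^+ 2 - n ^+ 2) / (B * (B + m ^+ 2 + n ^+ 2)))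
             +i* (2 * m * n / (B * (B + m ^+ 2 + n ^+ 2))).
Proof.
move=> B_gt0 rA_gt0 rA_le tAD0 spinA.
have rA := sradius_tangent_spin_outer_D0 B_gt0 rA_gt0 rA_le tAD0 spinA.
have curvA : curvature A = B + m ^+ 2 + n ^+ 2 by rewrite /curvature rA invrK.
split=> //; split; first by rewrite curvA.
have cA := center_of_spin_outer_D0 (lt0r_neq0 B_gt0) (lt0r_neq0 rA_gt0) spinA.
rewrite cA sqr_complex_scale rA.
by rewrite [B * _]mulrC invfM !mulrA.
Qed.
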